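(* Let $(G_k)_{k\in\mathbb Z}$ be a gibonacci sequence and let $F_k$ denote the Fibonacci numbers. Let $m$, $r$, $n$, $t$ be integers with $r\ge 2$ and $n\ge 1$. Then \begin{equation*} \begin{split} &F_r \sum_{j = 1}^n (-1)^{r(n - j)} F_{m - r}^{n - j} F_m^{j - 1} G_{j + t + 1} G_{j + t + 2} \cdots G_{j + t + r - 1} G_{j + t + m}\\ &\qquad = F_m^n G_{n + t + 1} G_{n + t + 2} \cdots G_{n + t + r} - (-1)^{rn} F_{m - r}^n G_{t + 1} G_{t + 2} \cdots G_{t + r}. \end{split} \end{equation*}
   Context: A gibonacci sequence $(G_k)_{k\in\mathbb Z}$ is defined by arbitrary initial values $G_0=a$, $G_1=b$ (numbers, not both zero) and $G_k=G_{k-1}+G_{k-2}$ for all integers $k$. The Fibonacci numbers $F_k$ are the gibonacci sequence with $F_0=0$, $F_1=1$, extended to all integer indices by the same recurrence. The convention $0^0=1$ is used for powers. *)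

From mathcomp Require Import all_boot all_order all_algebra.
Set Implicit Arguments. Unset Strict Implicit. Unset Printing Implicit Defensive.
Import Order.TTheory GRing.Theory Num.Theory.
Local Open Scope ring_scope.

Definition gibonacci (R : nzRingType) (G : int -> R) : Prop :=
  forall k : int, G k = G (k - 1) + G (k - 2).

Fixpoint fibn (n : nat) : nat :=
  match n with
  | 0 => 0
  | S n' => match n' with 0 => 1 | S n'' => (fibn n' + fibn n'')%N end
  end.

(* Fibonacci numbers extended to all integers by the same recurrence:
   F_{-(n+1)} = (-1)^n F_{n+1}. *)
Definition Fib (R : nzRingType) (k : int) : R :=
  match k with
  | Posz n => (fibn n)%:R
  | Negz n => (-1) ^+ n * (fibn n.+1)%:R
  end.

Lemma Fib0 (R : nzRingType) : Fib R 0 = 0. Proof. by []. Qed.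
Lemma Fib1 (R : nzRingType) : Fib R 1 = 1. Proof. by []. Qed.

(* Every gibonacci sequence X satisfies
     F_r X_(s+m) = F_m X_(s+r) - (-1)^r F_(m-r) X_s.
   For s = 0 both sides are gibonacci sequences in m, so it suffices to compare
   them at m = 0 and m = 1, where the identity reduces to F_(-k) = (-1)^(k+1) F_k
   and X_k = X_0 F_(k-1) + X_1 F_k; shifting X gives arbitrary s.
   With P_k = G_(k+t+1) ... G_(k+t+r) and a = (-1)^r F_(m-r), the identity at
   s = k+t+1 reads F_m P_(k+1) - a P_k = F_r G_(k+t+2) ... G_(k+t+r) G_(k+t+1+m),
   so the sum of the theorem telescopes along a^(n-k) F_m^k P_k. *)

From mathcomp Require Import all_boot all_order all_algebra.
From mathcomp Require Import ring zify.
Import Order.TTheory GRing.Theory Num.Theory.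
Local Open Scope ring_scope.

Lemma sumr_pow_telescope (R : comPzRingType) (a b : R) (u : nat -> R) (n : nat) :
  \sum_(0 <= k < n) a ^+ (n - k.+1) * b ^+ k * (b * u k.+1 - a * u k)
  = b ^+ n * u n - a ^+ n * u 0%N.
Proof.
rewrite (telescope_sumr_eq (fun k => a ^+ (n - k) * b ^+ k * u k)) // ?subnn ?subn0.
  by ring.
by move=> k /andP[_ ltkn]; rewrite -(subnSK ltkn) !exprS; ring.
Qed.

Section Gibonacci.
Variable R : comNzRingType.
Implicit Types (X : int -> R) (k m s : int).

Lemma gibonacci_Fib : gibonacci (Fib R).
Proof.
move=> k; rewrite -(subrK 2 k); set l := k - 2.
have -> : l + 2 - 1 = l + 1 by lia.
have -> : l + 2 - 2 = l by lia.
case: l => [n|[|[|n]]].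
- by rewrite -!PoszD !addnS !addn0 /= natrD addrC.
- by rewrite /= expr0; ring.
- by rewrite /= expr1 expr0; ring.
- have -> : Negz n.+2 + 2 = Negz n by rewrite !NegzE; lia.
  have -> : Negz n.+2 + 1 = Negz n.+1 by rewrite !NegzE; lia.
  by rewrite /= !exprS natrD; ring.
Qed.

Lemma Fib_opp_nat (n : nat) : Fib R (- n%:Z) = (-1) ^+ n.+1 * Fib R n.
Proof.
case: n => [|n]; first by rewrite /= mulr0.
by rewrite -NegzE /= !exprS; ring.
Qed.

Lemma gibonacci_shift X s : gibonacci X -> gibonacci (fun k => X (k + s)).
Proof. by move=> gX k; rewrite gX; congr (X _ + X _); lia. Qed.

Lemma gibonacci_eq0 X : gibonacci X -> X 0 = 0 -> X 1 = 0 -> forall k, X k = 0.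
Proof.
move=> gX X0 X1.
have up (n : nat) : X n = 0 /\ X n.+1 = 0.
  elim: n => [|n [Xn Xn1]] //; split=> //.
  rewrite gX; have -> : n.+2%:Z - 1 = n.+1 by lia.
  have -> : n.+2%:Z - 2 = n by lia.
  by rewrite Xn Xn1 addr0.
have down (n : nat) : X (- n%:Z) = 0 /\ X (1 - n%:Z) = 0.
  elim: n => [|n [Xn Xn1]] //; split; last by have -> : 1 - n.+1%:Z = - n%:Z by lia.
  have := gX (1 - n%:Z); have -> : 1 - n%:Z - 1 = - n%:Z by lia.
  have -> : 1 - n%:Z - 2 = - n.+1%:Z by lia.
  by rewrite Xn Xn1 add0r.
by case=> n; [case: (up n) | rewrite NegzE; case: (down n.+1)].
Qed.

Lemma gibonacci_Fib_decomp X : gibonacci X ->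
  forall k, X k = X 0 * Fib R (k - 1) + X 1 * Fib R k.
Proof.
move=> gX k; apply/eqP; rewrite -subr_eq0; apply/eqP; move: k.
apply: gibonacci_eq0 => [k||] /=.
- rewrite (gX k) (gibonacci_Fib k) (gibonacci_shift _ (-1) gibonacci_Fib k) /=.
  by ring.
- by rewrite expr0; ring.
- by ring.
Qed.

Lemma Fib_mul_gibonacci0 X (r : nat) m : gibonacci X ->
  Fib R r%:Z * X m = Fib R m * X r%:Z - (-1) ^+ r * Fib R (m - r%:Z) * X 0.
Proof.
move=> gX; apply/eqP; rewrite -subr_eq0; apply/eqP; move: m.
apply: gibonacci_eq0 => [k||] /=.
- rewrite (gX k) (gibonacci_Fib k) (gibonacci_shift _ (- r%:Z) gibonacci_Fib k) /=.
  by ring.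
- by rewrite sub0r Fib_opp_nat exprS -signr_odd; case: odd; ring.
- case: r => [|r]; first by rewrite subr0 /=; ring.
  have -> : 1 - r.+1%:Z = - r%:Z by lia.
  rewrite Fib_opp_nat (gibonacci_Fib_decomp _ gX r.+1).
  have -> : r.+1%:Z - 1 = r by lia.
  by rewrite exprS -signr_odd; case: odd; ring.
Qed.

Lemma Fib_mul_gibonacci X (r : nat) m s : gibonacci X ->
  Fib R r%:Z * X (s + m) = Fib R m * X (s + r%:Z) - (-1) ^+ r * Fib R (m - r%:Z) * X s.
Proof.
move=> gX; have := Fib_mul_gibonacci0 _ r m (gibonacci_shift _ s gX).
by rewrite /= add0r ![_ + s]addrC.
Qed.

Lemma Fib_mul_gibonacci_prod X (r : nat) m s : gibonacci X -> (0 < r)%N ->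
  Fib R m * \prod_(1 <= i < r.+1) X (s + i%:Z)
  - (-1) ^+ r * Fib R (m - r%:Z) * \prod_(1 <= i < r.+1) X (s - 1 + i%:Z)
  = Fib R r%:Z * (\prod_(1 <= i < r) X (s + i%:Z)) * X (s + m).
Proof.
move=> gX r_gt0.
rewrite [RHS]mulrAC (Fib_mul_gibonacci _ _ _ _ gX).
rewrite (big_nat_recr r 1) // (big_nat_recl r 1) //= subrK.
have -> : \prod_(1 <= i < r) X (s - 1 + i.+1%:Z) = \prod_(1 <= i < r) X (s + i%:Z).
  by apply: eq_bigr => i _; congr X; lia.
by ring.
Qed.

End Gibonacci.

Theorem proposition6 (R : numFieldType) (G : int -> R) (m t : int) (r n : nat) :
  gibonacci G -> (G 0 != 0) || (G 1 != 0) ->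
  (2 <= r)%N -> (1 <= n)%N ->
  Fib R r%:Z *
    \sum_(1 <= j < n.+1)
      ((-1) ^+ (r * (n - j))%N * Fib R (m - r%:Z) ^+ (n - j)%N
        * Fib R m ^+ (j - 1)%N
        * (\prod_(1 <= i < r) G (j%:Z + t + i%:Z)) * G (j%:Z + t + m))
  = Fib R m ^+ n * (\prod_(1 <= i < r.+1) G (n%:Z + t + i%:Z))
    - (-1) ^+ (r * n)%N * Fib R (m - r%:Z) ^+ n
      * (\prod_(1 <= i < r.+1) G (t + i%:Z)).
Proof.
move=> gG _ r_ge2 _.
set a := (-1) ^+ r * Fib R (m - r%:Z).
pose P (k : nat) := \prod_(1 <= i < r.+1) G (k%:Z + t + i%:Z).
have P0 : P 0%N = \prod_(1 <= i < r.+1) G (t + i%:Z).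
  by apply: eq_bigr => i _; rewrite add0r.
have step (k : nat) : Fib R m * P k.+1 - a * P k
    = Fib R r%:Z * (\prod_(1 <= i < r) G (k.+1%:Z + t + i%:Z)) * G (k.+1%:Z + t + m).
  rewrite -(Fib_mul_gibonacci_prod _ _ _ m (k.+1%:Z + t) gG (ltnW r_ge2)).
  by congr (_ - _ * _); apply: eq_bigr => i _; congr G; lia.
rewrite [in RHS]exprM -exprMn -/a -/(P n) -P0 -(sumr_pow_telescope _ a (Fib R m) P n).
rewrite big_add1 mulr_sumr; apply: eq_bigr => k _.
by rewrite step /a exprMn -exprM subn1 succnK; ring.
Qed.
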